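(* Let $\Gamma$ be a finitely generated discrete group, $A\trianglelefteq\Gamma$ normal of finite index, $Q=\Gamma/A$, and $\psi\colon Q\to PU(n)$ a homomorphism. The finite group $\mathrm{Hom}(Q,S^1)$ acts freely on $\mathrm{Hom}_A(\Gamma,U(n))_\psi$ by $(\chi\cdot\rho)(\gamma)=\chi([\gamma])\rho(\gamma)$, and the restriction map $R\colon\mathrm{Hom}_A(\Gamma,U(n))_\psi\to\mathrm{Hom}(A,S^1)$, $\rho\mapsto\rho|_A$, induces a homeomorphism from the orbit space $\mathrm{Hom}_A(\Gamma,U(n))_\psi/\mathrm{Hom}(Q,S^1)$ onto the image $R(\mathrm{Hom}_A(\Gamma,U(n))_\psi)$. In particular $R$ is a finite covering map onto its image with structure group $\mathrm{Hom}(Q,S^1)$.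
   Context: $S^1\subset U(n)$ denotes the scalar matrices (identified with the unit circle), $PU(n)=U(n)/S^1$. $\mathrm{Hom}_A(\Gamma,U(n))$ is the set of $\rho\in\mathrm{Hom}(\Gamma,U(n))$ with $\rho(A)\subset S^1$ (so $\rho|_A\in\mathrm{Hom}(A,S^1)$), and $\mathrm{Hom}_A(\Gamma,U(n))_\psi$ is the subset with induced homomorphism $\bar\rho\colon Q\to PU(n)$ equal to $\psi$. All representation spaces carry the topology of pointwise convergence. *)

From Stdlib Require Import Reals List.
From mathcomp Require Import ssreflect ssrfun ssrbool eqtype ssrnat seq fintype.

Set Implicit Arguments.
Unset Strict Implicit.

Record CC := mkC { re : R; im : R }.
Definition CC0 : CC := mkC 0%R 0%R.
Definition CC1 : CC := mkC 1%R 0%R.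
Definition Cadd (z w : CC) : CC := mkC (re z + re w)%R (im z + im w)%R.
Definition Cmul (z w : CC) : CC :=
  mkC (re z * re w - im z * im w)%R (re z * im w + im z * re w)%R.
Definition Cconj (z : CC) : CC := mkC (re z) (- im z)%R.
Definition Cnorm2 (z : CC) : R := (re z * re z + im z * im z)%R.
Definition unitC (z : CC) : Prop := Cnorm2 z = 1%R.

Definition Mat (n : nat) := 'I_n -> 'I_n -> CC.
Definition Csum (n : nat) (f : 'I_n -> CC) : CC :=
  seq.foldr Cadd CC0 (seq.map f (enum 'I_n)).
Definition mmul (n : nat) (A B : Mat n) : Mat n :=
  fun i j => Csum (fun k => Cmul (A i k) (B k j)).
Definition madj (n : nat) (A : Mat n) : Mat n := fun i j => Cconj (A j i).
Definition idm (n : nat) : Mat n := fun i j => if i == j then CC1 else CC0.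
Definition scal (n : nat) (z : CC) (A : Mat n) : Mat n := fun i j => Cmul z (A i j).
Definition scalarm (n : nat) (z : CC) : Mat n := scal z (@idm n).
Definition unitary (n : nat) (A : Mat n) : Prop :=
  mmul A (madj A) = @idm n /\ mmul (madj A) A = @idm n.

Definition Quot (X : Type) (E : X -> X -> Prop) : Type :=
  { S : X -> Prop | exists x, S = E x }.
Definition qproj (X : Type) (E : X -> X -> Prop) (x : X) : Quot E :=
  exist (fun S => exists y, S = E y) (E x) (ex_intro (fun y => E x = E y) x erefl).

Definition pclass (n : nat) (U : Mat n) : Mat n -> Prop :=
  fun V => exists z, unitC z /\ V = scal z U.
Definition PU (n : nat) : Type :=
  { S : Mat n -> Prop | exists U, unitary U /\ S = pclass U }.

Definition is_group (G : Type) (mul : G -> G -> G) (one : G) (inv : G -> G) : Prop :=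
  (forall x y z, mul x (mul y z) = mul (mul x y) z) /\
  (forall x, mul one x = x) /\ (forall x, mul x one = x) /\
  (forall x, mul (inv x) x = one) /\ (forall x, mul x (inv x) = one).

Inductive generated (G : Type) (mul : G -> G -> G) (one : G) (inv : G -> G)
  (gens : list G) : G -> Prop :=
| gen_one : generated mul one inv gens one
| gen_in : forall g, In g gens -> generated mul one inv gens g
| gen_inv : forall g, generated mul one inv gens g -> generated mul one inv gens (inv g)
| gen_mul : forall g h, generated mul one inv gens g -> generated mul one inv gens h ->
    generated mul one inv gens (mul g h).

Definition fin_generated (G : Type) (mul : G -> G -> G) (one : G) (inv : G -> G) : Prop :=
  exists gens : list G, forall g, generated mul one inv gens g.

Definition normal_subgroup (G : Type) (mul : G -> G -> G) (one : G) (inv : G -> G)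
  (A : G -> Prop) : Prop :=
  A one /\ (forall a b, A a -> A b -> A (mul a b)) /\ (forall a, A a -> A (inv a)) /\
  (forall g a, A a -> A (mul (mul g a) (inv g))).

Definition finite_index (G : Type) (mul : G -> G -> G) (inv : G -> G) (A : G -> Prop) : Prop :=
  exists reps : list G, forall g, exists r, In r reps /\ A (mul (inv r) g).

Definition coset_rel (G : Type) (mul : G -> G -> G) (inv : G -> G) (A : G -> Prop) :
  G -> G -> Prop := fun g h => A (mul (inv g) h).
Definition Quo (G : Type) (mul : G -> G -> G) (inv : G -> G) (A : G -> Prop) : Type :=
  Quot (coset_rel mul inv A).
Definition qmap (G : Type) (mul : G -> G -> G) (inv : G -> G) (A : G -> Prop) (g : G)
  : Quo mul inv A := qproj (coset_rel mul inv A) g.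

(* Hom(Q, S^1); the group law of Q is the one induced by the projection *)
Definition HomQS1 (G : Type) (mul : G -> G -> G) (inv : G -> G) (A : G -> Prop)
  (chi : Quo mul inv A -> CC) : Prop :=
  (forall q, unitC (chi q)) /\
  (forall g h, chi (qmap mul inv A (mul g h)) = Cmul (chi (qmap mul inv A g)) (chi (qmap mul inv A h))).

Definition proj_hom (G : Type) (mul : G -> G -> G) (inv : G -> G) (A : G -> Prop) (n : nat)
  (psi : Quo mul inv A -> PU n) : Prop :=
  forall g h (U V : Mat n), unitary U -> unitary V ->
    proj1_sig (psi (qmap mul inv A g)) = pclass U ->
    proj1_sig (psi (qmap mul inv A h)) = pclass V ->
    proj1_sig (psi (qmap mul inv A (mul g h))) = pclass (mmul U V).

Definition HomA_psi (G : Type) (mul : G -> G -> G) (inv : G -> G) (A : G -> Prop) (n : nat)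
  (psi : Quo mul inv A -> PU n) (rho : G -> Mat n) : Prop :=
  (forall g, unitary (rho g)) /\
  (forall g h, rho (mul g h) = mmul (rho g) (rho h)) /\
  (forall a, A a -> exists z, unitC z /\ rho a = @scalarm n z) /\
  (forall g, proj1_sig (psi (qmap mul inv A g)) = pclass (rho g)).

Definition act (G : Type) (mul : G -> G -> G) (inv : G -> G) (A : G -> Prop) (n : nat)
  (chi : Quo mul inv A -> CC) (rho : G -> Mat n) : G -> Mat n :=
  fun g => scal (chi (qmap mul inv A g)) (rho g).

(* restriction to A, identifying a scalar matrix z I with z \in S^1
   (read off the (0,0) entry; n > 0) *)
Definition restr (G : Type) (A : G -> Prop) (n : nat) (hn : (0 < n)%N) (rho : G -> Mat n)
  : {a : G | A a} -> CC :=
  fun a => rho (proj1_sig a) (Ordinal hn) (Ordinal hn).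

Definition topo (X : Type) := (X -> Prop) -> Prop.

Definition Ctopo : topo CC := fun O =>
  forall z, O z -> exists eps, (0 < eps)%R /\
    forall w, (Rabs (re w - re z) < eps)%R -> (Rabs (im w - im z) < eps)%R -> O w.

(* product topology = topology of pointwise convergence on I -> Y *)
Definition ptopo (I Y : Type) (tY : topo Y) : topo (I -> Y) := fun O =>
  forall f, O f -> exists (l : list I) (V : I -> Y -> Prop),
    (forall i, tY (V i)) /\ (forall i, V i (f i)) /\
    (forall h, (forall i, In i l -> V i (h i)) -> O h).

Definition Mtopo (n : nat) : topo (Mat n) := ptopo (ptopo Ctopo).

Definition sub_topo (X : Type) (tX : topo X) (S : X -> Prop) : topo {x | S x} :=
  fun V => exists O, tX O /\ forall x : {x | S x}, V x <-> O (proj1_sig x).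

Definition quot_topo (X : Type) (tX : topo X) (E : X -> X -> Prop) : topo (Quot E) :=
  fun V => tX (fun x => V (qproj E x)).

Definition continuous (X Y : Type) (tX : topo X) (tY : topo Y) (f : X -> Y) : Prop :=
  forall V, tY V -> tX (fun x => V (f x)).

Definition homeomorphism (X Y : Type) (tX : topo X) (tY : topo Y) (f : X -> Y) : Prop :=
  exists g : Y -> X, (forall x, g (f x) = x) /\ (forall y, f (g y) = y) /\
    continuous tX tY f /\ continuous tY tX g.

Definition relopen (X : Type) (tX : topo X) (S U : X -> Prop) : Prop :=
  (forall x, U x -> S x) /\ exists O, tX O /\ forall x, S x -> (U x <-> O x).

Definition img (X Y : Type) (f : X -> Y) (U : X -> Prop) : Y -> Prop :=
  fun y => exists x, U x /\ f x = y.

Definition homeo_on (X Y : Type) (tX : topo X) (tY : topo Y) (S : X -> Prop) (T : Y -> Prop)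
  (f : X -> Y) : Prop :=
  (forall x, S x -> T (f x)) /\ (forall y, T y -> exists x, S x /\ f x = y) /\
  (forall x x', S x -> S x' -> f x = f x' -> x = x') /\
  (forall U, (forall x, U x -> S x) -> (relopen tX S U <-> relopen tY T (img f U))).

Arguments sub_topo [X] tX S _.
Arguments quot_topo [X] tX E _.

(* Two representations in Hom_A(Gamma, U(n))_psi induce the same psi, so they differ by a
   character c of Gamma, and they have the same restriction to A iff c is trivial on A, i.e. iff
   c comes from Hom(Q, S^1): the fibres of R are exactly the orbits. Hom(Q, S^1) is finite since
   every element of Q has order at most [Gamma : A], so characters of Q take their values among
   finitely many roots of unity.
   The topological content is that R is open. If R rho is close to R rho0 on enough of A, the
   character c with rho = c . rho0 is close to 1 on A, so its values at coset representatives
   are close to roots of unity; since products of these roots are separated from each other,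
   rounding c produces a character of Q whose translate of rho is close to rho0. *)

From Stdlib Require Import Reals List Lra Psatz Lia.
From Stdlib Require Import Classical ClassicalEpsilon FunctionalExtensionality PropExtensionality ProofIrrelevance.
From mathcomp Require Import ssreflect ssrfun ssrbool eqtype ssrnat seq fintype.
Set Implicit Arguments.
Unset Strict Implicit.
Local Open Scope R_scope.

Lemma CC_ext (z w : CC) : re z = re w -> im z = im w -> z = w.
Proof. by case: z; case: w => ? ? ? ? /= -> ->. Qed.

Ltac CC_ring := apply: CC_ext => /=; ring.

Lemma CmulC z w : Cmul z w = Cmul w z. Proof. CC_ring. Qed.
Lemma CmulA z w u : Cmul z (Cmul w u) = Cmul (Cmul z w) u. Proof. CC_ring. Qed.
Lemma Cmul1 z : Cmul CC1 z = z. Proof. case: z => *; CC_ring. Qed.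
Lemma Cmul1r z : Cmul z CC1 = z. Proof. case: z => *; CC_ring. Qed.
Lemma Cmul0r z : Cmul z CC0 = CC0. Proof. CC_ring. Qed.
Lemma CmulDr z a b : Cmul z (Cadd a b) = Cadd (Cmul z a) (Cmul z b). Proof. CC_ring. Qed.
Lemma CconjM z w : Cconj (Cmul z w) = Cmul (Cconj z) (Cconj w). Proof. CC_ring. Qed.

Lemma sqr_ge0 x : 0 <= x * x. Proof. exact: Rle_0_sqr. Qed.

Lemma Cnorm2M z w : Cnorm2 (Cmul z w) = Cnorm2 z * Cnorm2 w.
Proof. rewrite /Cnorm2 /=; ring. Qed.
Lemma Cnorm2_ge0 z : 0 <= Cnorm2 z.
Proof. rewrite /Cnorm2; have := sqr_ge0 (re z); have := sqr_ge0 (im z); lra. Qed.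
Lemma Cnorm2_eq0 z : Cnorm2 z = 0 -> z = CC0.
Proof.
  case: z => a b; rewrite /Cnorm2 /= => h.
  have := sqr_ge0 a; have := sqr_ge0 b => hb ha.
  by apply: CC_ext => /=; apply: Rsqr_0_uniq; rewrite /Rsqr; lra.
Qed.

Lemma unitC1 : unitC CC1. Proof. rewrite /unitC /Cnorm2 /=; ring. Qed.
Lemma unitCM z w : unitC z -> unitC w -> unitC (Cmul z w).
Proof. by rewrite /unitC Cnorm2M => -> ->; ring. Qed.
Lemma unitC_conj z : unitC z -> unitC (Cconj z).
Proof. by rewrite /unitC /Cnorm2 /= => <-; ring. Qed.
Lemma Cmul_conjl z : unitC z -> Cmul (Cconj z) z = CC1.
Proof. rewrite /unitC /Cnorm2 => h; apply: CC_ext => /=; lra. Qed.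
Lemma Cmul_conjr z : unitC z -> Cmul z (Cconj z) = CC1.
Proof. by move=> h; rewrite CmulC Cmul_conjl. Qed.
Lemma unitC_neq0 z : unitC z -> z <> CC0.
Proof. by rewrite /unitC /Cnorm2 => h e; rewrite e /= in h; lra. Qed.

Lemma Cmul_injr z w u : u <> CC0 -> Cmul z u = Cmul w u -> z = w.
Proof.
  move=> hu e.
  have hn : Cnorm2 u <> 0 by move/Cnorm2_eq0.
  have e2 : Cmul (Cmul z u) (Cconj u) = Cmul (Cmul w u) (Cconj u) by rewrite e.
  clear e hu; move: e2 hn; case: z => a b; case: w => c d; case: u => p q.
  rewrite /Cnorm2 /= => [[e3 e4]] hn.
  by apply: CC_ext => /=; apply: (Rmult_eq_reg_r (p * p + q * q)) => //; nra.
Qed.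

Definition Cdist2 (z w : CC) : R :=
  (re z - re w) * (re z - re w) + (im z - im w) * (im z - im w).

Lemma Cdist2_ge0 z w : 0 <= Cdist2 z w.
Proof. rewrite /Cdist2; have := sqr_ge0 (re z - re w); have := sqr_ge0 (im z - im w); lra. Qed.
Lemma Cdist2C z w : Cdist2 z w = Cdist2 w z. Proof. rewrite /Cdist2; ring. Qed.
Lemma Cdist2xx z : Cdist2 z z = 0. Proof. rewrite /Cdist2; ring. Qed.
Lemma Cdist2_triangle x y z : Cdist2 x z <= 2 * Cdist2 x y + 2 * Cdist2 y z.
Proof.
  rewrite /Cdist2; have := sqr_ge0 (re x - 2 * re y + re z).
  have := sqr_ge0 (im x - 2 * im y + im z); nra.
Qed.
Lemma Cdist2_eq0 z w : Cdist2 z w = 0 -> z = w.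
Proof.
  rewrite /Cdist2 => h; have := sqr_ge0 (re z - re w); have := sqr_ge0 (im z - im w) => h2 h1.
  have e1 : Rsqr (re z - re w) = 0 by rewrite /Rsqr; lra.
  have e2 : Rsqr (im z - im w) = 0 by rewrite /Rsqr; lra.
  by apply: CC_ext; move/Rsqr_0_uniq: e1; move/Rsqr_0_uniq: e2; lra.
Qed.
Lemma Cdist2_gt0 z w : z <> w -> 0 < Cdist2 z w.
Proof.
  move=> hzw; have := Cdist2_ge0 z w; case: (Req_dec (Cdist2 z w) 0) => [/Cdist2_eq0 //|]; lra.
Qed.
Lemma Cdist2_mull u z w : Cdist2 (Cmul u z) (Cmul u w) = Cnorm2 u * Cdist2 z w.
Proof. rewrite /Cdist2 /Cnorm2 /=; ring. Qed.
Lemma Cdist2_mulr u z w : Cdist2 (Cmul z u) (Cmul w u) = Cnorm2 u * Cdist2 z w.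
Proof. by rewrite (CmulC z) (CmulC w) Cdist2_mull. Qed.
Lemma Cdist2_unitl u z w : unitC u -> Cdist2 (Cmul u z) (Cmul u w) = Cdist2 z w.
Proof. by rewrite Cdist2_mull => ->; ring. Qed.
Lemma Cdist2_unitr u z w : unitC u -> Cdist2 (Cmul z u) (Cmul w u) = Cdist2 z w.
Proof. by rewrite Cdist2_mulr => ->; ring. Qed.
Lemma Cdist2_mul_le a b a' b' : unitC a -> unitC b' ->
  Cdist2 (Cmul a b) (Cmul a' b') <= 2 * Cdist2 a a' + 2 * Cdist2 b b'.
Proof.
  move=> ha hb; apply: Rle_trans (Cdist2_triangle _ (Cmul a b') _) _.
  by rewrite Cdist2_unitl // Cdist2_unitr //; lra.
Qed.
Lemma Cnorm2_le_Cdist2 u v : Cnorm2 u <= 2 * Cnorm2 v + 2 * Cdist2 u v.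
Proof.
  rewrite /Cdist2 /Cnorm2; have := sqr_ge0 (re u - 2 * re v).
  have := sqr_ge0 (im u - 2 * im v); nra.
Qed.

Lemma Csum_scal n (z : CC) (f : 'I_n -> CC) :
  Csum (fun k => Cmul z (f k)) = Cmul z (Csum f).
Proof.
  rewrite /Csum; elim: (enum 'I_n) => [|x s IH] /=; first by rewrite Cmul0r.
  by rewrite IH CmulDr.
Qed.

Lemma In_enum n (i : 'I_n) : In i (enum 'I_n).
Proof.
  have : i \in enum 'I_n by rewrite mem_enum.
  elim: (enum 'I_n) => [|y s IH] //=; rewrite in_cons => /orP [/eqP ->|h]; auto.
Qed.

Lemma mx_ext n (U V : Mat n) : (forall i j, U i j = V i j) -> U = V.
Proof. by move=> e; do 2 apply: functional_extensionality => ?; apply: e. Qed.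

Lemma mmul_scal n a b (U V : Mat n) :
  mmul (scal a U) (scal b V) = scal (Cmul a b) (mmul U V).
Proof.
  apply: mx_ext => i j; rewrite /mmul /scal -Csum_scal; congr Csum.
  apply: functional_extensionality => k; CC_ring.
Qed.

Lemma madj_scal n a (U : Mat n) : madj (scal a U) = scal (Cconj a) (madj U).
Proof. by apply: mx_ext => i j; rewrite /madj /scal CconjM. Qed.

Lemma scal_scal n a b (U : Mat n) : scal a (scal b U) = scal (Cmul a b) U.
Proof. by apply: mx_ext => i j; rewrite /scal CmulA. Qed.

Lemma scal1 n (U : Mat n) : scal CC1 U = U.
Proof. by apply: mx_ext => i j; rewrite /scal Cmul1. Qed.

Lemma unitary_scal n z (U : Mat n) : unitC z -> unitary U -> unitary (scal z U).
Proof.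
  move=> hz [h1 h2]; split; rewrite madj_scal mmul_scal ?h1 ?h2.
  - by rewrite Cmul_conjr // scal1.
  - by rewrite Cmul_conjl // scal1.
Qed.

Lemma unitary_row_norm n (U : Mat n) i :
  unitary U -> foldr Rplus 0 (map (fun k => Cnorm2 (U i k)) (enum 'I_n)) = 1.
Proof.
  move=> [h1 _]; have := f_equal (fun M => re (M i i)) h1.
  rewrite /mmul /idm eqxx /Csum /= => <-.
  elim: (enum 'I_n) => [|k s IH] //=; rewrite IH /Cnorm2 /=; ring.
Qed.

Lemma unitary_entry_le1 n (U : Mat n) i k : unitary U -> Cnorm2 (U i k) <= 1.
Proof.
  move=> /(unitary_row_norm i) <-; have : In k (enum 'I_n) by apply: In_enum.
  elim: (enum 'I_n) => [|y s IH] //= [->|hk].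
  - elim: s {IH} => [|z s IHs] /=; first lra.
    by have := Cnorm2_ge0 (U i z); lra.
  - by have := Cnorm2_ge0 (U i y); have := IH hk; lra.
Qed.

Lemma unitary_row_neq0 n (U : Mat n) i : unitary U -> exists k, U i k <> CC0.
Proof.
  move=> hU; apply: NNPP => hz.
  have h0 k : U i k = CC0 by apply: NNPP => hk; apply: hz; exists k.
  move: (unitary_row_norm i hU); elim: (enum 'I_n) => [|k s IH] /=; first lra.
  by rewrite h0 /Cnorm2 /= Rmult_0_l !Rplus_0_l.
Qed.

Lemma scal_inj n (U : Mat n) z w : (0 < n)%N -> unitary U -> scal z U = scal w U -> z = w.
Proof.
  move=> hn hU e; have [k hk] := unitary_row_neq0 (Ordinal hn) hU.
  exact: Cmul_injr hk (f_equal (fun M => M (Ordinal hn) k) e).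
Qed.

Lemma scal_scalarm n c z : scal c (@scalarm n z) = scalarm (Cmul c z).
Proof. by rewrite /scalarm scal_scal. Qed.

Lemma scalarm_diag n z (i : 'I_n) : scalarm z i i = z.
Proof. by rewrite /scalarm /scal /idm eqxx Cmul1r. Qed.

Lemma pclass_scal n c (U : Mat n) : unitC c -> pclass (scal c U) = pclass U.
Proof.
  move=> hc; apply: functional_extensionality => V; apply: propositional_extensionality.
  split => [[z [hz ->]]|[z [hz ->]]].
  - by exists (Cmul z c); split; [exact: unitCM | rewrite scal_scal].
  - exists (Cmul z (Cconj c)); split; first by apply: unitCM => //; apply: unitC_conj.
    by rewrite scal_scal -CmulA Cmul_conjl // Cmul1r.
Qed.

Lemma pclass_refl n (U : Mat n) : pclass U U.
Proof. by exists CC1; split; [exact: unitC1 | rewrite scal1]. Qed.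

Lemma sig_eq (X : Type) (P : X -> Prop) (a b : {x | P x}) : proj1_sig a = proj1_sig b -> a = b.
Proof. by case: a; case: b => ? ? ? ? /= e; apply: ProofIrrelevanceTheory.subset_eq_compat. Qed.

Section Group.
Variables (G : Type) (mul : G -> G -> G) (one : G) (inv : G -> G).
Hypothesis hG : is_group mul one inv.

Lemma mulgA x y z : mul x (mul y z) = mul (mul x y) z. Proof. by case: hG. Qed.
Lemma mul1g x : mul one x = x. Proof. by case: hG => _ []. Qed.
Lemma mulg1 x : mul x one = x. Proof. by case: hG => _ [] _ []. Qed.
Lemma mulVg x : mul (inv x) x = one. Proof. by case: hG => _ [] _ [] _ []. Qed.
Lemma mulgV x : mul x (inv x) = one. Proof. by case: hG => _ [] _ [] _ []. Qed.
Lemma mulKg x y : mul (inv x) (mul x y) = y. Proof. by rewrite mulgA mulVg mul1g. Qed.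
Lemma mulKVg x y : mul x (mul (inv x) y) = y. Proof. by rewrite mulgA mulgV mul1g. Qed.
Lemma invg_uniq x y : mul x y = one -> y = inv x.
Proof. by move=> h; rewrite -(mulKg x y) h mulg1. Qed.
Lemma invgM x y : inv (mul x y) = mul (inv y) (inv x).
Proof. by symmetry; apply: invg_uniq; rewrite -mulgA (mulgA y) mulgV mul1g mulgV. Qed.
Lemma invgK x : inv (inv x) = x.
Proof. by symmetry; apply: invg_uniq; apply: mulVg. Qed.

Fixpoint gpow (g : G) (k : nat) : G :=
  match k with O => one | S k => mul g (gpow g k) end.

Lemma gpowD g i j : gpow g (i + j) = mul (gpow g i) (gpow g j).
Proof. by elim: i => [|i IH] /=; [rewrite mul1g | rewrite IH mulgA]. Qed.

Variable A : G -> Prop.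
Hypothesis hA : normal_subgroup mul one inv A.

Lemma normal1 : A one. Proof. by case: hA. Qed.
Lemma normalM a b : A a -> A b -> A (mul a b). Proof. by case: hA => _ [] h _; apply: h. Qed.
Lemma normalV a : A a -> A (inv a). Proof. by case: hA => _ [] _ [] h _; apply: h. Qed.
Lemma normalJ g a : A a -> A (mul (mul g a) (inv g)). Proof. by case: hA => _ [] _ [] _ h; apply: h. Qed.

Notation qmap := (qmap mul inv A).

Lemma qmap_eqP g h : qmap g = qmap h <-> A (mul (inv g) h).
Proof.
  split=> [e|hgh].
  - have := f_equal (fun q => proj1_sig q h) e; rewrite /= /coset_rel => ->.
    by rewrite mulVg; apply: normal1.
  - apply: sig_eq; apply: functional_extensionality => k /=.
    apply: propositional_extensionality; rewrite /coset_rel; split => hk.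
    + have -> : mul (inv h) k = mul (inv (mul (inv g) h)) (mul (inv g) k)
        by rewrite invgM invgK -mulgA mulKVg.
      by apply: normalM => //; apply: normalV.
    + have -> : mul (inv g) k = mul (mul (inv g) h) (mul (inv h) k) by rewrite -mulgA mulKVg.
      exact: normalM.
Qed.

Lemma qmap_surj (q : Quo mul inv A) : exists g, q = qmap g.
Proof. by case: q => S [g hg]; exists g; apply: sig_eq. Qed.

Lemma qmapM g g' h h' :
  qmap g = qmap g' -> qmap h = qmap h' -> qmap (mul g h) = qmap (mul g' h').
Proof.
  move=> /qmap_eqP e1 /qmap_eqP e2; apply/qmap_eqP.
  have -> : mul (inv (mul g h)) (mul g' h') =
            mul (mul (mul (inv h) (mul (inv g) g')) (inv (inv h))) (mul (inv h) h')
    by rewrite invgK invgM -!mulgA mulKVg.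
  by apply: normalM => //; apply: normalJ.
Qed.

Lemma qmap_normal a : A a -> qmap a = qmap one.
Proof. by move=> ha; apply/qmap_eqP; rewrite mulg1; apply: normalV. Qed.

(* Pigeonhole on the cosets of g^0, ..., g^m. *)
Lemma gpow_in_normal (reps : list G) :
  (forall g, exists r, In r reps /\ A (mul (inv r) g)) ->
  forall g, exists d, (1 <= d)%coq_nat /\ (d <= length reps)%coq_nat /\ A (gpow g d).
Proof.
  move=> hr g; have [p hp] := choice _ (fun k => hr (gpow g k)).
  pose l := List.map p (List.seq 0 (S (length reps))).
  have hlen : length l = S (length reps) by rewrite /l List.length_map List.length_seq.
  have [i [j [hij e]]] : exists i j, ((i < j)%coq_nat /\ (j < S (length reps))%coq_nat) /\ p i = p j.
  { apply: NNPP => hn.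
    have hnd : NoDup l.
    { apply/(NoDup_nth l one) => i j hi hj e; rewrite hlen in hi hj.
      rewrite /l !(List.nth_indep _ one (p 0%nat)) ?List.length_map ?List.length_seq //
        !List.map_nth !List.seq_nth // in e.
      case: (Nat.lt_total i j) => [h|[//|h]]; exfalso; apply: hn.
      - by exists i, j.
      - by exists j, i. }
    have := NoDup_incl_length hnd (l' := reps); rewrite hlen.
    suff /[swap] /[apply] : incl l reps by lia.
    by move=> x /in_map_iff [k [<- _]]; apply: (proj1 (hp k)). }
  exists (Nat.sub j i); split; [lia | split; [lia |]].
  have := normalM (normalV (proj2 (hp i))) (proj2 (hp j)).
  rewrite e invgM invgK -mulgA mulKVg.
  by rewrite {1}(_ : j = (i + Nat.sub j i)%coq_nat) ?gpowD ?mulKg //; lia.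
Qed.

End Group.

Fixpoint Cpow (z : CC) (k : nat) : CC :=
  match k with O => CC1 | S k => Cmul z (Cpow z k) end.

Definition cis (t : R) : CC := mkC (cos t) (sin t).

Lemma unitC_cis t : unitC (cis t).
Proof. by rewrite /unitC /Cnorm2 /=; have := sin2_cos2 t; rewrite /Rsqr; lra. Qed.

Lemma unitC_polar w : unitC w -> exists t, 0 <= t <= 2 * PI /\ w = cis t.
Proof.
  case: w => a b; rewrite /unitC /Cnorm2 /= => h.
  have ha : -1 <= a <= 1 by have := sqr_ge0 b; split; nra.
  have hs : sqrt (1 - Rsqr a) = Rabs b by rewrite -sqrt_Rsqr_abs; congr sqrt; rewrite /Rsqr; lra.
  have hb := acos_bound a; have PIpos := PI_RGT_0.
  case: (Rle_lt_dec 0 b) => hb0.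
  - exists (acos a); split; first lra.
    by rewrite /cis cos_acos // sin_acos // hs Rabs_right //; lra.
  - exists (2 * PI - acos a); split; first lra.
    rewrite /cis cos_minus sin_minus cos_2PI sin_2PI cos_acos // sin_acos // hs Rabs_left //.
    by apply: CC_ext => /=; ring.
Qed.

Lemma Cpow_cis t k : Cpow (cis t) k = cis (INR k * t).
Proof.
  elim: k => [|k IH]; first by rewrite /= /cis Rmult_0_l cos_0 sin_0.
  rewrite S_INR /= IH /cis Rmult_plus_distr_r Rmult_1_l cos_plus sin_plus.
  by apply: CC_ext => /=; ring.
Qed.

Lemma Cdist2_cis a b : Cdist2 (cis a) (cis b) = 2 - 2 * cos (a - b).
Proof.
  rewrite /Cdist2 /cis /= cos_minus.
  by have := sin2_cos2 a; have := sin2_cos2 b; rewrite /Rsqr; nra.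
Qed.

Lemma near_multiple_2PI (d : nat) phi : 0 <= phi <= 2 * PI * INR d ->
  exists k, (k <= d)%coq_nat /\ Rabs (phi - 2 * PI * INR k) <= PI.
Proof.
  have PIpos := PI_RGT_0.
  elim: d phi => [|d IH] phi hphi.
  - exists 0%nat; split; first lia.
    rewrite /= in hphi; have -> : phi = 0 by lra.
    by rewrite /= Rmult_0_r Rminus_0_r Rabs_R0; lra.
  - rewrite S_INR in hphi.
    case: (Rle_lt_dec phi (2 * PI * INR d)) => h.
    + by have [k [hk hk2]] := IH phi (conj (proj1 hphi) h); exists k; split; auto.
    + case: (Rle_lt_dec phi (2 * PI * INR d + PI)) => h2.
      * by exists d; split; [lia | rewrite Rabs_right; lra].
      * by exists (S d); split; [lia | rewrite S_INR Rabs_left1; lra].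
Qed.

Definition roots_of_unity (d : nat) : list CC :=
  List.map (fun k => cis (2 * PI * INR k / INR d)) (List.seq 0 (S d)).

Lemma roots_of_unity_unit d z : In z (roots_of_unity d) -> unitC z.
Proof. by move=> /in_map_iff [k [<- _]]; apply: unitC_cis. Qed.

(* With w = cis t, pick k such that u := d t - 2 PI k has |u| <= PI: the root cis (2 PI k / d)
   is at angle u / d from w, w^d is at angle u from 1, and cos decreases on [0, PI]. *)
Lemma near_root_of_unity w (d : nat) : unitC w -> (1 <= d)%coq_nat ->
  exists z, In z (roots_of_unity d) /\ Cdist2 w z <= Cdist2 (Cpow w d) CC1.
Proof.
  move=> hw hd; have [t [ht ->]] := unitC_polar hw.
  have PIpos := PI_RGT_0.
  have hdp : 1 <= INR d by apply: (le_INR 1).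
  have [k [hk hk2]] := near_multiple_2PI (phi := INR d * t) (d := d) ltac:(split; nra).
  exists (cis (2 * PI * INR k / INR d)); split.
  { by apply/in_map_iff; exists k; split => //; apply/in_seq; lia. }
  have -> : CC1 = cis 0 by rewrite /cis cos_0 sin_0.
  rewrite Cpow_cis !Cdist2_cis Rminus_0_r.
  set u := INR d * t - 2 * PI * INR k in hk2.
  have -> : t - 2 * PI * INR k / INR d = u / INR d by rewrite /u; field; lra.
  have -> : INR d * t = u + 2 * INR k * PI by rewrite /u; ring.
  rewrite cos_period.
  suff : cos u <= cos (u / INR d) by lra.
  have cos_abs x : cos x = cos (Rabs x).
  { by case: (Rcase_abs x) => hx; [rewrite (Rabs_left x hx) cos_neg | rewrite (Rabs_right x hx)]. }
  rewrite (cos_abs u) (cos_abs (u / INR d)).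
  have hud : Rabs (u / INR d) <= Rabs u.
  { rewrite /Rdiv Rabs_mult Rabs_inv (Rabs_right (INR d)); last lra.
    have := Rabs_pos u.
    have : / INR d <= 1 by rewrite -Rinv_1; apply: Rinv_le_contravar; lra.
    have : 0 < / INR d by apply: Rinv_0_lt_compat; lra.
    nra. }
  have := Rabs_pos (u / INR d).
  case: (Req_dec (Rabs (u / INR d)) (Rabs u)) => [-> | ?]; first lra.
  by move=> ?; apply/Rlt_le/cos_decreasing_1; lra.
Qed.

Lemma root_of_unity_in w (d : nat) : unitC w -> (1 <= d)%coq_nat -> Cpow w d = CC1 ->
  In w (roots_of_unity d).
Proof.
  move=> hw hd e; have [z [hz]] := near_root_of_unity hw hd.
  rewrite e Cdist2xx => hc.
  by rewrite (@Cdist2_eq0 w z) //; have := Cdist2_ge0 w z; lra.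
Qed.

Definition is_character (G : Type) (mul : G -> G -> G) (c : G -> CC) : Prop :=
  (forall g, unitC (c g)) /\ (forall g h, c (mul g h) = Cmul (c g) (c h)).

Section Characters.
Variables (G : Type) (mul : G -> G -> G) (one : G) (inv : G -> G).
Hypothesis hG : is_group mul one inv.
Variable A : G -> Prop.
Hypothesis hA : normal_subgroup mul one inv A.

Notation qmap := (qmap mul inv A).
Notation HomQS1 := (@HomQS1 G mul inv A).

Lemma character1 c : is_character mul c -> c one = CC1.
Proof.
  move=> [hu hm]; apply: (@Cmul_injr _ _ (c one)); first exact: unitC_neq0.
  by rewrite Cmul1 -hm (mul1g hG).
Qed.

Lemma character_pow c g k : is_character mul c -> c (gpow mul one g k) = Cpow (c g) k.
Proof.
  move=> hc; elim: k => [|k IH] /=; first exact: character1.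
  by rewrite (proj2 hc) IH.
Qed.

Lemma HomQS1_character chi : HomQS1 chi -> is_character mul (fun g => chi (qmap g)).
Proof. by case=> hu hm; split. Qed.

Lemma HomQS1_normal chi a : HomQS1 chi -> A a -> chi (qmap a) = CC1.
Proof.
  by move=> hc ha; rewrite (qmap_normal hG hA ha); apply: (character1 (HomQS1_character hc)).
Qed.

Lemma HomQS1_conj chi : HomQS1 chi -> HomQS1 (fun q => Cconj (chi q)).
Proof.
  move=> [hu hm]; split=> [q|g h]; first exact: unitC_conj.
  by rewrite hm CconjM.
Qed.

Lemma character_factors c : is_character mul c -> (forall a, A a -> c a = CC1) ->
  exists chi, HomQS1 chi /\ forall g, chi (qmap g) = c g.
Proof.
  move=> [hu hm] hcA; have [rep hrep] := choice _ (@qmap_surj _ mul inv A).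
  have hrepc g : c (rep (qmap g)) = c g.
  { have /(qmap_eqP hG hA) hg : qmap (rep (qmap g)) = qmap g by rewrite -hrep.
    by rewrite -{2}(mulKVg hG (rep (qmap g)) g) hm (hcA _ hg) Cmul1r. }
  exists (fun q => c (rep q)); split=> [|g]; last exact: hrepc.
  by split=> [q|g h]; rewrite ?hrepc ?hm.
Qed.

End Characters.

Section Representations.
Variables (G : Type) (mul : G -> G -> G) (one : G) (inv : G -> G).
Hypothesis hG : is_group mul one inv.
Variable A : G -> Prop.
Hypothesis hA : normal_subgroup mul one inv A.
Variables (n : nat) (hn : (0 < n)%N) (psi : Quo mul inv A -> PU n).

Notation qmap := (qmap mul inv A).
Notation HomQS1 := (@HomQS1 G mul inv A).
Notation X := (@HomA_psi G mul inv A n psi).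
Notation res := (@restr G A n hn).
Notation act := (@act G mul inv A n).

Lemma act_comp chi1 chi2 rho : act chi2 (act chi1 rho) = act (fun q => Cmul (chi2 q) (chi1 q)) rho.
Proof. by apply: functional_extensionality => g; rewrite /act scal_scal. Qed.

Lemma act1 rho : act (fun _ => CC1) rho = rho.
Proof. by apply: functional_extensionality => g; rewrite /act scal1. Qed.

Lemma act_Kconj chi rho : HomQS1 chi -> act chi (act (fun q => Cconj (chi q)) rho) = rho.
Proof.
  move=> [hu _]; rewrite act_comp -[RHS]act1; congr act.
  by apply: functional_extensionality => q; apply: Cmul_conjr.
Qed.

Lemma HomA_psi_act chi rho : HomQS1 chi -> X rho -> X (act chi rho).
Proof.
  move=> [hcu hcm] [hu [hm [hs hp]]]; rewrite /act; split; [|split; [|split]].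
  - by move=> g; apply: unitary_scal.
  - by move=> g h; rewrite hcm hm mmul_scal.
  - move=> a ha; have [z [hz ->]] := hs a ha.
    by exists (Cmul (chi (qmap a)) z); split; [exact: unitCM | exact: scal_scalarm].
  - by move=> g; rewrite pclass_scal.
Qed.

Lemma act_eq_id chi rho : X rho -> act chi rho = rho -> chi = (fun _ => CC1).
Proof.
  move=> [hu _] e; apply: functional_extensionality => q; have [g ->] := qmap_surj q.
  by apply: (scal_inj hn (hu g)); rewrite scal1 -{2}e.
Qed.

Lemma restr_act chi rho : HomQS1 chi -> res (act chi rho) = res rho.
Proof.
  move=> hc; apply: functional_extensionality => [[a ha]].
  by rewrite /restr /act /scal /= (HomQS1_normal hG hA hc ha) Cmul1.
Qed.

(* Both rho and sigma lift psi, so they agree up to a scalar at each g. *)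
Lemma HomA_psi_ratio rho sigma : X rho -> X sigma ->
  exists c, is_character mul c /\ forall g, sigma g = scal (c g) (rho g).
Proof.
  move=> [hu1 [hm1 [_ hp1]]] [hu2 [hm2 [_ hp2]]].
  have hex g : exists z, unitC z /\ sigma g = scal z (rho g).
  { by have := pclass_refl (sigma g); rewrite -(hp2 g) (hp1 g). }
  have [c hc] := choice _ hex.
  exists c; split; last by move=> g; case: (hc g).
  split=> [g|g h]; first by case: (hc g).
  apply: (scal_inj hn (hu1 (mul g h))).
  by rewrite -(proj2 (hc (mul g h))) hm2 (proj2 (hc g)) (proj2 (hc h)) mmul_scal hm1.
Qed.

Lemma Cdist2_restr_ratio rho sigma c (a : {a | A a}) : X rho ->
  (forall g, sigma g = scal (c g) (rho g)) ->
  Cdist2 (res rho a) (res sigma a) = Cdist2 CC1 (c (proj1_sig a)).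
Proof.
  case: a => a ha [_ [_ [hs _]]] hsig; have [z [hz ez]] := hs a ha.
  rewrite /restr /= hsig ez /scal scalarm_diag -{1}(Cmul1 z) Cdist2_unitr //.
Qed.

Lemma restr_eq_orbit rho sigma : X rho -> X sigma -> res rho = res sigma ->
  exists chi, HomQS1 chi /\ sigma = act chi rho.
Proof.
  move=> hr hs e; have [c [hc hcs]] := HomA_psi_ratio hr hs.
  have hcA a : A a -> c a = CC1.
  { move=> ha; have := Cdist2_restr_ratio (exist _ a ha) hr hcs.
    by rewrite e Cdist2xx => /esym/Cdist2_eq0. }
  have [chi [hchi hchic]] := character_factors hG hA hc hcA.
  exists chi; split => //; apply: functional_extensionality => g.
  by rewrite /act hchic hcs.
Qed.

End Representations.

Lemma finite_gap (l : list CC) :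
  exists s, 0 < s /\ forall u, In u l -> Cdist2 u CC1 < s -> u = CC1.
Proof.
  elim: l => [|x l [s [hs hl]]]; first by exists 1; split; [lra | done].
  case: (classic (x = CC1)) => [-> | hx].
  - by exists s; split => // u [<- // | hu]; apply: hl.
  - have hxs := Cdist2_gt0 hx.
    exists (Rmin s (Cdist2 x CC1)); split; first exact: Rmin_pos.
    move=> u [<- | hu] hd; first by have := Rmin_r s (Cdist2 x CC1); lra.
    by apply: hl => //; have := Rmin_l s (Cdist2 x CC1); lra.
Qed.

Fixpoint tuples (T : Type) (Z : list T) (k : nat) : list (list T) :=
  match k with O => [:: nil] | S k => flat_map (fun z => List.map (cons z) (tuples Z k)) Z end.

Lemma tuples_complete (T : Type) (Z : list T) (t : list T) :
  (forall x, In x t -> In x Z) -> In t (tuples Z (length t)).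
Proof.
  elim: t => [|a t IH] h /=; first by left.
  apply/in_flat_map; exists a; split; first by apply: h; left.
  by apply/in_map/IH => x hx; apply: h; right.
Qed.

Section FiniteIndex.
Variables (G : Type) (mul : G -> G -> G) (one : G) (inv : G -> G).
Hypothesis hG : is_group mul one inv.
Variable A : G -> Prop.
Hypothesis hA : normal_subgroup mul one inv A.
Variable reps : list G.
Hypothesis reps_cover : forall g, exists r, In r reps /\ A (mul (inv r) g).

Notation qmap := (qmap mul inv A).
Notation HomQS1 := (@HomQS1 G mul inv A).
Notation gpow := (gpow mul one).
Notation m := (length reps).

Lemma coset_rep q : exists r, In r reps /\ q = qmap r.
Proof.
  have [g ->] := qmap_surj q; have [r [hr hrg]] := reps_cover g.
  by exists r; split => //; symmetry; apply/(qmap_eqP hG hA).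
Qed.

(* Every g has a power in A of exponent between 1 and m, so characters of Q take their values
   among these roots of unity. *)
Definition unity_roots : list CC := flat_map roots_of_unity (List.seq 1 m).

Lemma unity_roots_unit z : In z unity_roots -> unitC z.
Proof. by move=> /in_flat_map [d [_ hz]]; apply: roots_of_unity_unit hz. Qed.

Lemma HomQS1_value chi g : HomQS1 chi -> In (chi (qmap g)) unity_roots.
Proof.
  move=> hc; have [d [hd1 [hd2 hdA]]] := gpow_in_normal hG hA reps_cover g.
  apply/in_flat_map; exists d; split; first by apply/in_seq; lia.
  apply: root_of_unity_in => //; first exact: (proj1 hc).
  by rewrite -(character_pow hG g d (HomQS1_character hc)) (HomQS1_normal hG hA hc hdA).
Qed.

Lemma HomQS1_finite : exists l, forall chi, HomQS1 chi -> In chi l.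
Proof.
  have hidx q : exists i, (i < m)%coq_nat /\ q = qmap (List.nth i reps one).
  { have [r [hr ->]] := coset_rep q; have [i [hi e]] := In_nth reps r one hr.
    by exists i; rewrite e. }
  have [idx hidx'] := choice _ hidx.
  exists (List.map (fun t q => List.nth (idx q) t CC0) (tuples unity_roots m)).
  move=> chi hc; apply/in_map_iff.
  exists (List.map (fun r => chi (qmap r)) reps); split.
  - apply: functional_extensionality => q; have [hi hq] := hidx' q.
    rewrite (List.nth_indep _ _ (chi (qmap one))) ?List.length_map //.
    by rewrite (List.map_nth (fun r => chi (qmap r))) -hq.
  - rewrite -[X in tuples _ X](List.length_map (fun r => chi (qmap r))).
    by apply: tuples_complete => x /in_map_iff [r [<- _]]; apply: HomQS1_value.
Qed.

Lemma character_near_root c g d : is_character mul c ->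
  (1 <= d)%coq_nat -> (d <= m)%coq_nat ->
  exists z, In z unity_roots /\ Cdist2 (c g) z <= Cdist2 (c (gpow g d)) CC1.
Proof.
  move=> hc hd1 hd2; have [z [hz hcz]] := near_root_of_unity (proj1 hc g) hd1.
  exists z; split; last by rewrite (character_pow hG g d hc).
  by apply/in_flat_map; exists d; split => //; apply/in_seq; lia.
Qed.

Lemma unity_roots_gap : exists s, 0 < s /\ forall z1 z2 z3,
  In z1 unity_roots -> In z2 unity_roots -> In z3 unity_roots ->
  Cdist2 (Cmul z1 z2) z3 < s -> Cmul z1 z2 = z3.
Proof.
  pose l := flat_map (fun z1 => flat_map (fun z2 =>
              List.map (fun z3 => Cmul (Cmul z1 z2) (Cconj z3)) unity_roots) unity_roots) unity_roots.
  have [s [hs hl]] := finite_gap l.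
  exists s; split => // z1 z2 z3 h1 h2 h3 hd.
  have hu3 := unity_roots_unit h3.
  have hin : In (Cmul (Cmul z1 z2) (Cconj z3)) l.
  { apply/in_flat_map; exists z1; split => //; apply/in_flat_map; exists z2; split => //.
    by apply/in_map_iff; exists z3. }
  have := hl _ hin; rewrite -(Cmul_conjr hu3) Cdist2_unitr; last exact: unitC_conj.
  by move=> /(_ hd) /(f_equal (Cmul^~ z3)); rewrite -!CmulA Cmul_conjl // !Cmul1r.
Qed.

Section Lift.
Variable ri : Quo mul inv A -> G.
Hypothesis ri_spec : forall q, In (ri q) reps /\ q = qmap (ri q).
Variable ord : G -> nat.
Hypothesis ord_spec : forall g, (1 <= ord g)%coq_nat /\ (ord g <= m)%coq_nat /\ A (gpow g (ord g)).

Lemma ri_normal g : A (mul (inv (ri (qmap g))) g).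
Proof. by apply/(qmap_eqP hG hA); symmetry; apply: (proj2 (ri_spec _)). Qed.

Definition test_set (F : list G) : list G :=
  List.map (fun r => gpow r (ord r)) reps ++
  flat_map (fun r1 => List.map (fun r2 => mul (inv (ri (qmap (mul r1 r2)))) (mul r1 r2)) reps) reps ++
  List.map (fun g => mul (inv (ri (qmap g))) g) F.

Lemma test_set_normal F a : In a (test_set F) -> A a.
Proof.
  rewrite /test_set !in_app_iff => [[/in_map_iff [r [<- _]] | []]].
  - exact: (proj2 (proj2 (ord_spec r))).
  - by case/in_flat_map => r1 [_ /in_map_iff [r2 [<- _]]]; apply: ri_normal.
  - by case/in_map_iff => g [<- _]; apply: ri_normal.
Qed.

(* Rounding c at the coset representatives to nearby roots of unity gives a character of Q,
   because products of such roots are separated by the gap [s]. *)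
Lemma rounded_character s c zt :
  (forall z1 z2 z3, In z1 unity_roots -> In z2 unity_roots -> In z3 unity_roots ->
     Cdist2 (Cmul z1 z2) z3 < s -> Cmul z1 z2 = z3) ->
  is_character mul c ->
  (forall r, In r reps -> In (zt r) unity_roots /\ Cdist2 (c r) (zt r) < s / 16) ->
  (forall r1 r2, In r1 reps -> In r2 reps ->
     Cdist2 (c (mul (inv (ri (qmap (mul r1 r2)))) (mul r1 r2))) CC1 < s / 16) ->
  HomQS1 (fun q => Cconj (zt (ri q))).
Proof.
  move=> gap [cu cm] hzt hb.
  have ri_in q := proj1 (ri_spec q).
  have zu r : In r reps -> unitC (zt r) by move=> hr; apply: unity_roots_unit (proj1 (hzt r hr)).
  split=> [q|g h]; first exact/unitC_conj/zu.
  rewrite -CconjM; congr Cconj.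
  set r1 := ri (qmap g); set r2 := ri (qmap h).
  have -> : qmap (mul g h) = qmap (mul r1 r2).
  { by apply: (qmapM hG hA); apply: (proj2 (ri_spec _)). }
  set r3 := ri (qmap (mul r1 r2)); set b := mul (inv r3) (mul r1 r2).
  have [z1 d1] := hzt r1 (ri_in _); have [z2 d2] := hzt r2 (ri_in _).
  have [z3 d3] := hzt r3 (ri_in _); have db : Cdist2 (c b) CC1 < s / 16 := hb r1 r2 (ri_in _) (ri_in _).
  have ec : Cmul (c r1) (c r2) = Cmul (c r3) (c b) by rewrite -!cm /b (mulKVg hG).
  symmetry; apply: gap => //.
  have t1 := Cdist2_triangle (Cmul (zt r1) (zt r2)) (Cmul (c r1) (c r2)) (zt r3).
  have t2 := Cdist2_mul_le (zt r2) (c r1) (zu r1 (ri_in _)) (cu r2).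
  have t3 := Cdist2_triangle (Cmul (c r3) (c b)) (c r3) (zt r3).
  have t4 : Cdist2 (Cmul (c r3) (c b)) (c r3) = Cdist2 (c b) CC1.
  { by rewrite -{2}(Cmul1r (c r3)) Cdist2_unitl. }
  rewrite ec in t1 t2; rewrite Cdist2C in d1; rewrite Cdist2C in d2.
  by have := Cdist2_ge0 (c b) CC1; lra.
Qed.

Lemma lift_character F e : 0 < e -> exists d, 0 < d /\ forall c, is_character mul c ->
  (forall a, In a (test_set F) -> Cdist2 (c a) CC1 < d) ->
  exists chi, HomQS1 chi /\ forall g, In g F -> Cdist2 (Cmul (chi (qmap g)) (c g)) CC1 < e.
Proof.
  move=> he; have [s [hs gap]] := unity_roots_gap.
  exists (Rmin (e / 4) (s / 16)); split; first by apply: Rmin_pos; lra.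
  move=> c hc hclose; set d := Rmin (e / 4) (s / 16) in hclose.
  have hde : d <= e / 4 by apply: Rmin_l.
  have hds : d <= s / 16 by apply: Rmin_r.
  have hz r : exists z, In r reps -> In z unity_roots /\ Cdist2 (c r) z < d.
  { case: (classic (In r reps)) => hr; last by exists CC0.
    have [hd1 [hd2 _]] := ord_spec r.
    have [z [hzr hzc]] := character_near_root r hc hd1 hd2.
    exists z => _; split => //; apply: Rle_lt_trans hzc _; apply: hclose.
    by apply/in_or_app; left; apply/in_map_iff; exists r. }
  have [zt hzt] := choice _ hz.
  have zu r : In r reps -> unitC (zt r) by move=> hr; apply: unity_roots_unit (proj1 (hzt r hr)).
  exists (fun q => Cconj (zt (ri q))); split.
  - apply: (rounded_character gap hc) => [r hr | r1 r2 h1 h2].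
    + by have [? ?] := hzt r hr; split => //; lra.
    + apply: Rlt_le_trans hds; apply: hclose; apply/in_or_app; right; apply/in_or_app; left.
      by apply/in_flat_map; exists r1; split => //; apply/in_map_iff; exists r2.
  - move=> g hg; set r := ri (qmap g); have hr := proj1 (ri_spec (qmap g)).
    have ha : Cdist2 (c (mul (inv r) g)) CC1 < d.
    { by apply: hclose; apply/in_or_app; right; apply/in_or_app; right; apply/in_map_iff; exists g. }
    have eg : c g = Cmul (c r) (c (mul (inv r) g)) by rewrite -(proj2 hc) (mulKVg hG).
    rewrite eg -(Cmul_conjl (zu r hr)) Cdist2_unitl; last exact/unitC_conj/zu.
    have t1 := Cdist2_triangle (Cmul (c r) (c (mul (inv r) g))) (c r) (zt r).
    have t2 : Cdist2 (Cmul (c r) (c (mul (inv r) g))) (c r) = Cdist2 (c (mul (inv r) g)) CC1.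
    { by rewrite -{2}(Cmul1r (c r)) Cdist2_unitl //; apply: (proj1 hc). }
    by have := proj2 (hzt r hr); lra.
Qed.

End Lift.

Lemma character_lift F e : 0 < e -> exists (T : list G) d, 0 < d /\ (forall a, In a T -> A a) /\
  forall c, is_character mul c -> (forall a, In a T -> Cdist2 (c a) CC1 < d) ->
  exists chi, HomQS1 chi /\ forall g, In g F -> Cdist2 (Cmul (chi (qmap g)) (c g)) CC1 < e.
Proof.
  move=> he.
  have [ri ri_spec] : exists ri, forall q, In (ri q) reps /\ q = qmap (ri q) := choice _ coset_rep.
  have [ord ord_spec] : exists ord, forall g,
      (1 <= ord g)%coq_nat /\ (ord g <= m)%coq_nat /\ A (gpow g (ord g))
    := choice _ (gpow_in_normal hG hA reps_cover).
  have [d [hd hlift]] := lift_character ri_spec ord_spec F he.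
  exists (test_set ri ord F), d; split; [done | split; [|done]].
  exact: (test_set_normal ri_spec ord_spec (F := F)).
Qed.

End FiniteIndex.

Lemma finite_min (I : Type) (l : list I) (P : I -> R -> Prop) :
  (forall i e e', P i e -> 0 < e' -> e' <= e -> P i e') ->
  (forall i, In i l -> exists e, 0 < e /\ P i e) -> exists e, 0 < e /\ forall i, In i l -> P i e.
Proof.
  move=> hm; elim: l => [|x l IH] h; first by exists 1; split; [lra | done].
  have [e1 [he1 hp1]] := h x (or_introl erefl).
  have [e2 [he2 hp2]] := IH (fun i hi => h i (or_intror hi)).
  have hpos : 0 < Rmin e1 e2 by apply: Rmin_pos.
  exists (Rmin e1 e2); split => // i [<- | hi].
  - exact: hm hp1 hpos (Rmin_l _ _).
  - exact: hm (hp2 i hi) hpos (Rmin_r _ _).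
Qed.

Lemma Ctopo_nbhd O z : Ctopo O -> O z -> exists e, 0 < e /\ forall w, Cdist2 z w < e -> O w.
Proof.
  move=> hO hz; have [e [he hb]] := hO z hz.
  exists (e * e); split; first nra.
  have abs_lt x : x * x < e * e -> Rabs x < e.
  { by case: (Rcase_abs x) => hx; [rewrite Rabs_left | rewrite Rabs_right]; nra. }
  move=> w; rewrite /Cdist2 => hw.
  have := sqr_ge0 (re z - re w); have := sqr_ge0 (im z - im w) => h2 h1.
  by apply: hb; apply: abs_lt; nra.
Qed.

(* The radius r is chosen so that the cross terms 2 (z - w)(w - v) and (w - v)^2 stay below
   the slack e - |z - w|^2. *)
Lemma Ctopo_Cdist2_lt z e : Ctopo (fun w => Cdist2 z w < e).
Proof.
  move=> w hw; set D := e - Cdist2 z w.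
  have hD : 0 < D by rewrite /D; lra.
  set a := Rabs (re w - re z); set b := Rabs (im w - im z).
  have ha : 0 <= a by apply: Rabs_pos.
  have hb : 0 <= b by apply: Rabs_pos.
  set r := Rmin 1 (D / (2 * (a + b) + 4)).
  have hr : 0 < r.
  { by apply: Rmin_pos; [lra | apply: Rdiv_lt_0_compat; lra]. }
  have hr1 : r <= 1 by apply: Rmin_l.
  have hr2 : r * (2 * (a + b) + 4) <= D.
  { have h := Rmin_r 1 (D / (2 * (a + b) + 4)); rewrite -/r in h.
    have := Rmult_le_compat_r (2 * (a + b) + 4) _ _ ltac:(lra) h.
    by rewrite /Rdiv Rmult_assoc Rinv_l; lra. }
  exists r; split => // v h1 h2.
  set p := re w - re v; set q := im w - im v.
  have hp : Rabs p < r by rewrite /p Rabs_minus_sym.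
  have hq : Rabs q < r by rewrite /q Rabs_minus_sym.
  have cross x y c : Rabs x = c -> Rabs y < r -> x * y <= c * r.
  { move=> hx hy; apply: Rle_trans (Rle_abs _) _; rewrite Rabs_mult hx.
    by apply: Rmult_le_compat_l; [rewrite -hx; apply: Rabs_pos | lra]. }
  have k1 := cross (re z - re w) p a ltac:(by rewrite Rabs_minus_sym) hp.
  have k2 := cross (im z - im w) q b ltac:(by rewrite Rabs_minus_sym) hq.
  have sq x : Rabs x < r -> x * x <= r * r.
  { by move=> hx; apply: Rle_trans (Rle_abs _) _; rewrite Rabs_mult; have := Rabs_pos x; nra. }
  have k3 := sq p hp; have k4 := sq q hq.
  have -> : Cdist2 z v = Cdist2 z w + 2 * ((re z - re w) * p) + 2 * ((im z - im w) * q)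
                         + p * p + q * q by rewrite /Cdist2 /p /q; ring.
  have hrr : r * r <= r by nra.
  by rewrite /D in hr2; lra.
Qed.

Lemma Ctopo_full : Ctopo (fun _ => True).
Proof. by move=> z _; exists 1; split; [lra | done]. Qed.

Lemma ptopo_full I Y (tY : topo Y) : tY (fun _ => True) -> ptopo (I := I) tY (fun _ => True).
Proof. by move=> h f _; exists nil, (fun _ _ => True). Qed.

Section ProductTopology.
Variables (I Y : Type) (tY : topo Y) (close : Y -> Y -> R -> Prop).
Hypothesis close_mono : forall y y' e e', close y y' e -> e <= e' -> close y y' e'.

Lemma ptopo_nbhd :
  (forall O y, tY O -> O y -> exists e, 0 < e /\ forall y', close y y' e -> O y') ->
  forall O (f : I -> Y), ptopo tY O -> O f ->
  exists (l : list I) e, 0 < e /\ forall h, (forall i, In i l -> close (f i) (h i) e) -> O h.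
Proof.
  move=> hb O f hO hf; have [l [V [hV [hfV hsub]]]] := hO f hf.
  have [e [he hP]] := finite_min (l := l) (P := fun i e => forall y', close (f i) y' e -> V i y')
     (fun i e e' h _ hle y' hy => h y' (close_mono hy hle))
     (fun i _ => hb (V i) (f i) (hV i) (hfV i)).
  by exists l, e; split => // h hh; apply: hsub => i hi; apply: hP hi _ (hh i hi).
Qed.

Lemma ptopo_box :
  (forall y e, tY (fun y' => close y y' e)) -> tY (fun _ => True) ->
  forall (f : I -> Y) (l : list I) e, ptopo tY (fun h => forall i, In i l -> close (f i) (h i) e).
Proof.
  move=> hopen hfull f l e h hh.
  exists l, (fun i y => In i l -> close (f i) y e); split; [|split] => //.
  - move=> i; case: (classic (In i l)) => hi.
    + rewrite (_ : (fun y => _) = (fun y => close (f i) y e)) //.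
      by apply: functional_extensionality => y; apply: propositional_extensionality; tauto.
    + rewrite (_ : (fun y => _) = (fun _ => True)) //.
      by apply: functional_extensionality => y; apply: propositional_extensionality; tauto.
  - by move=> k hk i hi; apply: hk.
Qed.

End ProductTopology.

Lemma ptopo_of_nbhds I Y (tY : topo Y) (O : (I -> Y) -> Prop) :
  (forall f, O f -> exists B, ptopo tY B /\ B f /\ forall h, B h -> O h) -> ptopo tY O.
Proof.
  move=> h f hf; have [B [hB [hBf hsub]]] := h f hf.
  have [l [V [hV [hfV hs]]]] := hB f hBf.
  by exists l, V; split => //; split => // k hk; apply/hsub/hs.
Qed.

Definition row_close n (u v : 'I_n -> CC) e := forall j, Cdist2 (u j) (v j) < e.
Definition mx_close n (U V : Mat n) e := forall i j, Cdist2 (U i j) (V i j) < e.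
Definition rep_close (G : Type) n (F : list G) (rho rho' : G -> Mat n) e :=
  forall g, In g F -> mx_close (rho g) (rho' g) e.
Definition fun_close (I : Type) (L : list I) (f f' : I -> CC) e :=
  forall a, In a L -> Cdist2 (f a) (f' a) < e.

Lemma Cdist2_lt_mono z w e e' : Cdist2 z w < e -> e <= e' -> Cdist2 z w < e'.
Proof. exact: Rlt_le_trans. Qed.

Lemma row_nbhd n O (u : 'I_n -> CC) : ptopo Ctopo O -> O u ->
  exists e, 0 < e /\ forall v, row_close u v e -> O v.
Proof.
  move=> hO hu; have [l [e [he hs]]] := ptopo_nbhd Cdist2_lt_mono Ctopo_nbhd hO hu.
  by exists e; split => // v hv; apply: hs => i _; apply: hv.
Qed.

Lemma row_close_open n (u : 'I_n -> CC) e : ptopo Ctopo (fun v => row_close u v e).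
Proof.
  rewrite (_ : (fun v => _) = (fun v => forall j, In j (enum 'I_n) -> Cdist2 (u j) (v j) < e)).
  - exact: (ptopo_box (close := fun z w e => Cdist2 z w < e) Ctopo_Cdist2_lt Ctopo_full).
  - apply: functional_extensionality => v; apply: propositional_extensionality.
    by split=> h j; [move=> _; apply: h | apply: (h j (In_enum j))].
Qed.

Lemma mx_nbhd n O (U : Mat n) : Mtopo O -> O U -> exists e, 0 < e /\ forall V, mx_close U V e -> O V.
Proof.
  move=> hO hU.
  have [l [e [he hs]]] := ptopo_nbhd (close := @row_close n)
     (fun y y' e e' h hle j => Rlt_le_trans _ _ _ (h j) hle) (@row_nbhd n) hO hU.
  by exists e; split => // V hV; apply: hs => i _ j; apply: hV.
Qed.

Lemma mx_close_open n (U : Mat n) e : Mtopo (fun V => mx_close U V e).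
Proof.
  rewrite (_ : (fun V => _) = (fun V => forall i, In i (enum 'I_n) -> row_close (U i) (V i) e)).
  - exact: (ptopo_box (close := @row_close n) (@row_close_open n) (ptopo_full Ctopo_full)).
  - apply: functional_extensionality => V; apply: propositional_extensionality.
    by split=> h i; [move=> _ j; apply: h | move=> j; apply: (h i (In_enum i))].
Qed.

Lemma rep_nbhd (G : Type) n O (rho : G -> Mat n) : ptopo (@Mtopo n) O -> O rho ->
  exists (F : list G) e, 0 < e /\ forall rho', rep_close F rho rho' e -> O rho'.
Proof.
  have mono (U V : Mat n) e e' : mx_close U V e -> e <= e' -> mx_close U V e'.
  { by move=> h hle i j; apply: Rlt_le_trans (h i j) hle. }
  exact: (ptopo_nbhd mono (@mx_nbhd n)).
Qed.

Lemma rep_close_open (G : Type) n (F : list G) (rho : G -> Mat n) e :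
  ptopo (@Mtopo n) (fun rho' => rep_close F rho rho' e).
Proof. exact: (ptopo_box (close := @mx_close n) (@mx_close_open n) (ptopo_full (ptopo_full Ctopo_full))). Qed.

Lemma rep_close_refl (G : Type) n (F : list G) (rho : G -> Mat n) e : 0 < e -> rep_close F rho rho e.
Proof. by move=> he g _ i j; rewrite Cdist2xx. Qed.

Lemma fun_nbhd (I : Type) O (f : I -> CC) : ptopo Ctopo O -> O f ->
  exists (L : list I) e, 0 < e /\ forall f', fun_close L f f' e -> O f'.
Proof. exact: (ptopo_nbhd Cdist2_lt_mono Ctopo_nbhd). Qed.

Lemma fun_close_open (I : Type) (f : I -> CC) L e : ptopo Ctopo (fun f' => fun_close L f f' e).
Proof. exact: (ptopo_box (close := fun z w e => Cdist2 z w < e) Ctopo_Cdist2_lt Ctopo_full). Qed.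

Lemma rep_openI (G : Type) n (O1 O2 : (G -> Mat n) -> Prop) :
  ptopo (@Mtopo n) O1 -> ptopo (@Mtopo n) O2 -> ptopo (@Mtopo n) (fun rho => O1 rho /\ O2 rho).
Proof.
  move=> h1 h2; apply: ptopo_of_nbhds => rho [r1 r2].
  have [F1 [e1 [he1 hF1]]] := rep_nbhd h1 r1; have [F2 [e2 [he2 hF2]]] := rep_nbhd h2 r2.
  exists (fun rho' => rep_close (F1 ++ F2) rho rho' (Rmin e1 e2)).
  split; [exact: rep_close_open | split; first by apply/rep_close_refl/Rmin_pos].
  move=> rho' hb; split; [apply: hF1 | apply: hF2] => g hg i j.
  - by apply: Rlt_le_trans (hb g (in_or_app _ _ _ (or_introl hg)) i j) (Rmin_l _ _).
  - by apply: Rlt_le_trans (hb g (in_or_app _ _ _ (or_intror hg)) i j) (Rmin_r _ _).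
Qed.

Lemma mx_close_scal_separated n (U : Mat n) w : (0 < n)%N -> unitary U -> w <> CC1 ->
  exists e, 0 < e /\ forall V, mx_close U V e -> mx_close U (scal w V) e -> False.
Proof.
  move=> hn hU hw; have [k hk] := unitary_row_neq0 (Ordinal hn) hU.
  set u := U (Ordinal hn) k in hk *.
  have hN : 0 < Cnorm2 u.
  { by have := Cnorm2_ge0 u; case: (Req_dec (Cnorm2 u) 0) => [/Cnorm2_eq0 //|]; lra. }
  have hD := Cdist2_gt0 hw.
  set e := Rmin (Cnorm2 u / 4) (Cdist2 w CC1 * Cnorm2 u / 32).
  have e1 : e <= Cnorm2 u / 4 by apply: Rmin_l.
  have e2 : e <= Cdist2 w CC1 * Cnorm2 u / 32 by apply: Rmin_r.
  exists e; split; first by apply: Rmin_pos; nra.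
  move=> V /(_ (Ordinal hn) k) + /(_ (Ordinal hn) k); rewrite /scal -/u => c1 c2.
  set v := V (Ordinal hn) k in c1 c2.
  have nb := Cnorm2_le_Cdist2 u v.
  have t1 := Cdist2_triangle (Cmul w v) u v.
  have t2 : Cdist2 (Cmul w v) v = Cnorm2 v * Cdist2 w CC1 by rewrite -{2}(Cmul1 v) Cdist2_mulr.
  have : Cnorm2 u / 4 * Cdist2 w CC1 <= Cnorm2 v * Cdist2 w CC1 by apply: Rmult_le_compat_r; lra.
  have := Rmult_lt_0_compat _ _ hD hN.
  by rewrite Cdist2C in c2; lra.
Qed.

Lemma list_sig (T : Type) (P : T -> Prop) (l : list T) : (forall x, In x l -> P x) ->
  exists L : list {x | P x}, forall x (p : P x), In x l -> In (exist P x p) L.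
Proof.
  elim: l => [|x l IH] hl; first by exists nil.
  have [L hL] := IH (fun y hy => hl y (or_intror hy)).
  exists (exist P x (hl x (or_introl erefl)) :: L) => y p [e | hy]; last by right; apply: hL.
  by left; apply: sig_eq.
Qed.

Section Covering.
Variables (G : Type) (mul : G -> G -> G) (one : G) (inv : G -> G).
Hypothesis hG : is_group mul one inv.
Variable A : G -> Prop.
Hypothesis hA : normal_subgroup mul one inv A.
Variable reps : list G.
Hypothesis reps_cover : forall g, exists r, In r reps /\ A (mul (inv r) g).
Variables (n : nat) (hn : (0 < n)%N) (psi : Quo mul inv A -> PU n).

Notation qmap := (qmap mul inv A).
Notation HomQS1 := (@HomQS1 G mul inv A).
Notation X := (@HomA_psi G mul inv A n psi).
Notation res := (@restr G A n hn).
Notation act := (@act G mul inv A n).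
Notation tM := (ptopo (@Mtopo n)).
Notation tAmb := (ptopo (I := {a : G | A a}) Ctopo).
Notation Im := (fun f => exists x : {rho | X rho}, f = res (proj1_sig x)).
Notation orbit_rel := (fun x y : {rho | X rho} =>
  exists chi, HomQS1 chi /\ proj1_sig y = act chi (proj1_sig x)).

Lemma restr_continuous O : tAmb O -> tM (fun rho => O (res rho)).
Proof.
  move=> hO; apply: ptopo_of_nbhds => rho hOr.
  have [L [e [he hL]]] := fun_nbhd hO hOr.
  exists (fun rho' => rep_close (List.map (@proj1_sig _ _) L) rho rho' e).
  split; [exact: rep_close_open | split; first exact: rep_close_refl].
  by move=> rho' hb; apply: hL => a ha; apply: (hb _ (in_map _ _ _ ha)).
Qed.

Lemma rep_close_act chi F rho rho' e : HomQS1 chi ->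
  rep_close F (act chi rho) (act chi rho') e <-> rep_close F rho rho' e.
Proof.
  move=> [hu _]; split=> h g hg i j; have := h g hg i j;
  by rewrite /act /scal Cdist2_unitl.
Qed.

(* rho is c . rho0 for a character c of Gamma which is close to 1 on A; a character of Q close
   to the inverse of c then moves rho close to rho0. *)
Lemma translate_near rho0 F e : X rho0 -> 0 < e ->
  exists (L : list {a | A a}) d, 0 < d /\ forall rho, X rho -> fun_close L (res rho0) (res rho) d ->
  exists chi, HomQS1 chi /\ rep_close F rho0 (act chi rho) e.
Proof.
  move=> hx0 he; have [T [d [hd [hTA hlift]]]] := character_lift hG hA reps_cover F he.
  have [L hL] := list_sig hTA.
  exists L, d; split => // rho hx hclose.
  have [c [hc hcs]] := HomA_psi_ratio hn hx0 hx.
  have hcT a : In a T -> Cdist2 (c a) CC1 < d.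
  { move=> ha; rewrite Cdist2C -(Cdist2_restr_ratio hn (exist _ a (hTA a ha)) hx0 hcs).
    exact/hclose/hL. }
  have [chi [hchi hnear]] := hlift c hc hcT.
  exists chi; split => // g hg i j; rewrite /act hcs scal_scal /scal.
  rewrite -{1}(Cmul1 (rho0 g i j)) Cdist2_mulr Cdist2C.
  have := unitary_entry_le1 i j (proj1 hx0 g); have := Cnorm2_ge0 (rho0 g i j).
  have := Cdist2_ge0 (Cmul (chi (qmap g)) (c g)) CC1; have := hnear g hg; nra.
Qed.

Lemma restr_open U : relopen tM X U -> relopen tAmb Im (img res U).
Proof.
  move=> [hUX [O [hO hUO]]]; split.
  { by move=> f [rho [hU <-]]; exists (exist _ rho (hUX rho hU)). }
  exists (fun f => exists rho0 L d, U rho0 /\ 0 < d /\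
    (forall rho, X rho -> fun_close L (res rho0) (res rho) d -> img res U (res rho)) /\
    fun_close L (res rho0) f d).
  split.
  - apply: ptopo_of_nbhds => f [rho0 [L [d [hU0 [hd [hP hf]]]]]].
    exists (fun f' => fun_close L (res rho0) f' d); split; first exact: fun_close_open.
    by split => // f' hf'; exists rho0, L, d.
  - move=> f [[rho hrho] ->] /=; split => [[rho0 [hU0 e0]] | [rho0 [L [d [_ [_ [hP hf]]]]]]].
    + have hx0 := hUX _ hU0.
      have [F [e [he hF]]] := rep_nbhd hO (proj1 (hUO rho0 hx0) hU0).
      have [L [d [hd hL]]] := translate_near F hx0 he.
      exists rho0, L, d; split => //; split => //; split; last by rewrite e0 => a _; rewrite Cdist2xx.
      move=> rho' hx' hc; have [chi [hchi hb]] := hL rho' hx' hc.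
      exists (act chi rho'); split; last exact: (restr_act hG hA hn rho' hchi).
      by apply: (proj2 (hUO _ (HomA_psi_act hchi hx'))); apply: hF.
    + exact: hP.
Qed.

Lemma orbit_relE x y : orbit_rel x y <-> res (proj1_sig x) = res (proj1_sig y).
Proof.
  case: x => x hx; case: y => y hy /=; split => [[chi [hc ->]] | e].
  - exact/esym/(restr_act hG hA hn x hc).
  - exact: (restr_eq_orbit hG hA hx hy e).
Qed.

Lemma restr_orbit_homeo : exists h : Quot orbit_rel -> {f | Im f},
  homeomorphism (quot_topo (sub_topo tM X) orbit_rel) (sub_topo tAmb Im) h /\
  forall x, proj1_sig (h (qproj orbit_rel x)) = res (proj1_sig x).
Proof.
  have qproj_eqP x y : qproj orbit_rel x = qproj orbit_rel y <-> res (proj1_sig x) = res (proj1_sig y).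
  { split=> [e | e].
    - by apply/orbit_relE; move: (f_equal (fun q => proj1_sig q y) e) => /= ->; apply/orbit_relE.
    - apply: sig_eq; apply: functional_extensionality => z; apply: propositional_extensionality.
      by rewrite /= !orbit_relE e. }
  have qproj_surj q : exists x, q = qproj orbit_rel x.
  { by case: q => S [x hx]; exists x; apply: sig_eq. }
  have [qrep hqrep] := choice _ qproj_surj.
  have [frep hfrep] := choice _ (fun y : {f | Im f} => proj2_sig y).
  pose h q : {f | Im f} := exist Im (res (proj1_sig (qrep q))) (ex_intro _ (qrep q) erefl).
  have hh x : proj1_sig (h (qproj orbit_rel x)) = res (proj1_sig x).
  { by apply/qproj_eqP; rewrite -hqrep. }
  exists h; split => //; exists (fun y => qproj orbit_rel (frep y)); split; [|split; [|split]].
  - by move=> q; rewrite {2}(hqrep q); apply/qproj_eqP; rewrite -hfrep.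
  - by move=> y; apply: sig_eq; rewrite hh -hfrep.
  - move=> V [O [hO hV]]; exists (fun rho => O (res rho)); split; first exact: restr_continuous.
    by move=> x; rewrite hV hh.
  - move=> V [O' [hO' hV]].
    have hU : relopen tM X (fun rho => X rho /\ O' rho).
    { by split=> [x [] //|]; exists O'; split => // x hx; tauto. }
    have [_ [O2 [hO2 hiff]]] := restr_open hU.
    exists O2; split => // y; rewrite -(hiff _ (proj2_sig y)); split.
    + move=> /(proj1 (hV _)) ho; exists (proj1_sig (frep y)).
      by split; [split; [exact: proj2_sig | exact: ho] | rewrite -hfrep].
    + move=> [rho [[hx ho] hr]].
      have <- : qproj orbit_rel (exist _ rho hx) = qproj orbit_rel (frep y).
      { by apply/qproj_eqP; rewrite /= hr hfrep. }
      exact/(proj2 (hV _)).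
Qed.

Lemma separating_nbhd rho0 : X rho0 -> exists F eta, 0 < eta /\ forall chi rho, HomQS1 chi ->
  rep_close F rho0 rho eta -> rep_close F rho0 (act chi rho) eta -> chi = (fun _ => CC1).
Proof.
  move=> hx0; have [l hl] := HomQS1_finite hG hA reps_cover.
  have hwit chi : exists g, HomQS1 chi -> chi <> (fun _ => CC1) -> chi (qmap g) <> CC1.
  { case: (classic (exists g, chi (qmap g) <> CC1)) => [[g hg] | hno]; first by exists g.
    exists one => _ hne; exfalso; apply: hne; apply: functional_extensionality => q.
    by have [g ->] := qmap_surj q; apply: NNPP => h; apply: hno; exists g. }
  have [gs hgs] := choice _ hwit.
  pose P chi e := HomQS1 chi -> chi <> (fun _ => CC1) -> forall rho,
    mx_close (rho0 (gs chi)) (rho (gs chi)) e -> mx_close (rho0 (gs chi)) (act chi rho (gs chi)) e -> False.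
  have [eta [heta hP]] : exists eta, 0 < eta /\ forall chi, In chi l -> P chi eta.
  { apply: finite_min => [chi e e' h _ hle hc hne rho b1 b2 | chi _].
    - by apply: (h hc hne rho) => i j; apply: Rlt_le_trans hle; [apply: b1 | apply: b2].
    - case: (classic (HomQS1 chi /\ chi <> (fun _ => CC1))) => [[hc hne] | hno].
      + have [e [he hsep]] := mx_close_scal_separated hn (proj1 hx0 (gs chi)) (hgs chi hc hne).
        by exists e; split => // _ _ rho; apply: hsep.
      + by exists 1; split => [|hc hne]; [lra | case: hno]. }
  exists (List.map gs l), eta; split => // chi rho hc h1 h2; apply: NNPP => hne.
  have hg : In (gs chi) (List.map gs l) by apply/in_map/hl.
  exact: (hP chi (hl chi hc) hc hne rho (h1 _ hg) (h2 _ hg)).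
Qed.

Section Sheets.
Variables (rho0 : G -> Mat n) (F : list G) (eta : R).
Hypothesis separating : forall chi rho, HomQS1 chi ->
  rep_close F rho0 rho eta -> rep_close F rho0 (act chi rho) eta -> chi = (fun _ => CC1).

Notation W := (fun rho => X rho /\ rep_close F rho0 rho eta).

Lemma nbhd_relopen : relopen tM X W.
Proof.
  split=> [x [] //|]; exists (fun rho => rep_close F rho0 rho eta).
  by split=> [|x hx]; [exact: rep_close_open | tauto].
Qed.

Lemma sheet_relopen chi : HomQS1 chi -> relopen tM X (img (act chi) W).
Proof.
  move=> hc; split=> [x [s [[hs _] <-]] | ]; first exact: HomA_psi_act.
  exists (fun rho => rep_close F (act chi rho0) rho eta); split; first exact: rep_close_open.
  move=> x hx; split=> [[s [[hs hb] <-]] | hb]; first exact/rep_close_act.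
  exists (act (fun q => Cconj (chi q)) x); split; last exact: act_Kconj.
  split; first exact: HomA_psi_act (HomQS1_conj hc) hx.
  by apply/(rep_close_act _ _ _ _ hc); rewrite act_Kconj.
Qed.

Lemma sheet_restr chi x : HomQS1 chi -> img (act chi) W x -> img res W (res x).
Proof. by move=> hc [s [hs <-]]; exists s; split => //; rewrite (restr_act hG hA hn s hc). Qed.

Lemma restr_inj_sheet chi x x' : HomQS1 chi ->
  img (act chi) W x -> img (act chi) W x' -> res x = res x' -> x = x'.
Proof.
  move=> hc [s1 [hs1 <-]] [s2 [hs2 <-]]; rewrite !(restr_act hG hA hn _ hc) => e.
  have [chi' [hc' e2]] := restr_eq_orbit hG hA (proj1 hs1) (proj1 hs2) e.
  rewrite e2 in hs2 *; rewrite (separating hc' (proj2 hs1) (proj2 hs2)).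
  by rewrite act1.
Qed.

Lemma restr_sheet_homeo chi : HomQS1 chi -> homeo_on tM tAmb (img (act chi) W) (img res W) res.
Proof.
  move=> hc; have hS := sheet_relopen hc.
  split; [by move=> x; apply: sheet_restr | split; [|split]].
  - move=> y [s [hs <-]]; exists (act chi s); split; first by exists s.
    exact: (restr_act hG hA hn s hc).
  - by move=> x x'; apply: restr_inj_sheet.
  - move=> U hUS; split=> [[_ [O1 [hO1 hiff1]]] | [hsub [O2 [hO2 hiff2]]]].
    + have [_ [OS [hOS hiffS]]] := hS.
      have hUX : relopen tM X U.
      { split=> [x hx | ]; first exact: (proj1 hS) (hUS x hx).
        exists (fun rho => O1 rho /\ OS rho); split; first exact: rep_openI.
        move=> x hx; split=> [hu | [o1 os]].
        - by have hs1 := hUS x hu; split; [apply/hiff1 | apply/hiffS].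
        - by have hs1 := proj2 (hiffS x hx) os; apply/hiff1. }
      have [_ [O2 [hO2 hiff2]]] := restr_open hUX.
      split=> [f [x [hu <-]] | ]; first exact: (sheet_restr hc (hUS x hu)).
      exists O2; split => // f [s0 [hs0 <-]]; apply: hiff2.
      by exists (exist _ s0 (proj1 hs0)).
    + split => //; exists (fun rho => O2 (res rho)); split; first exact: restr_continuous.
      move=> x hx; have hT := sheet_restr hc hx.
      split=> [hu | ho]; first by apply/(hiff2 _ hT); exists x.
      have [x' [hu' e']] := proj2 (hiff2 _ hT) ho.
      by rewrite -(restr_inj_sheet hc (hUS x' hu') hx e').
Qed.

Lemma restr_fibre rho : X rho -> (img res W (res rho) <-> exists chi, HomQS1 chi /\ img (act chi) W rho).
Proof.
  move=> hx; split=> [[s0 [hs0 e0]] | [chi [hc hs]]]; last exact: (sheet_restr hc hs).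
  have [chi [hc e2]] := restr_eq_orbit hG hA (proj1 hs0) hx e0.
  by exists chi; split => //; exists s0.
Qed.

End Sheets.

Lemma restr_covering rho0 : X rho0 -> exists W : (G -> Mat n) -> Prop,
  W rho0 /\ relopen tM X W /\ relopen tAmb Im (img res W) /\
  (forall chi, HomQS1 chi -> relopen tM X (img (act chi) W) /\ homeo_on tM tAmb (img (act chi) W) (img res W) res) /\
  (forall chi rho, HomQS1 chi -> W rho -> W (act chi rho) -> chi = (fun _ => CC1)) /\
  (forall rho, X rho -> (img res W (res rho) <-> exists chi, HomQS1 chi /\ img (act chi) W rho)).
Proof.
  move=> hx0; have [F [eta [heta hsep]]] := separating_nbhd hx0.
  exists (fun rho => X rho /\ rep_close F rho0 rho eta).
  split; first by split => //; exact: rep_close_refl.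
  split; first exact: nbhd_relopen.
  split; first exact/restr_open/nbhd_relopen.
  split; first by move=> chi hc; split; [exact: sheet_relopen | exact: restr_sheet_homeo].
  split; first by move=> chi rho hc [_ h1] [_ h2]; apply: hsep h1 h2.
  exact: restr_fibre.
Qed.

End Covering.

Theorem mainTheorem19
  (G : Type) (mul : G -> G -> G) (one : G) (inv : G -> G)
  (hG : is_group mul one inv) (hfg : fin_generated mul one inv)
  (A : G -> Prop) (hA : normal_subgroup mul one inv A) (hfin : finite_index mul inv A)
  (n : nat) (hn : (0 < n)%N)
  (psi : Quo mul inv A -> PU n) (hpsi : proj_hom psi) :
  let X := HomA_psi psi in
  let H := @HomQS1 G mul inv A in
  let R := @restr G A n hn in
  let tX := sub_topo (ptopo (@Mtopo n)) X in
  let tAmb := ptopo (I := {a : G | A a}) Ctopo in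
  let E := fun x y : {rho | X rho} =>
             exists chi, H chi /\ proj1_sig y = act chi (proj1_sig x) in
  let Im := fun f => exists x : {rho | X rho}, f = R (proj1_sig x) in
  (exists l : list (Quo mul inv A -> CC), forall chi, H chi -> In chi l) /\
  (forall chi rho, H chi -> X rho ->
     X (act chi rho) /\ (act chi rho = rho -> chi = (fun _ => CC1))) /\
  (exists h : Quot E -> {f | Im f},
     homeomorphism (quot_topo tX E) (sub_topo tAmb Im) h /\
     forall x, proj1_sig (h (qproj E x)) = R (proj1_sig x)) /\
  (* in particular R is a finite covering onto its image with structure group
     Hom(Q,S^1): every point has an open W whose translates chi.W are the
     disjoint sheets over the open set R(W), each mapped homeomorphically *)
  (forall rho0, X rho0 -> exists W : (G -> Mat n) -> Prop,
     W rho0 /\ relopen (ptopo (@Mtopo n)) X W /\ relopen tAmb Im (img R W) /\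
     (forall chi, H chi ->
        relopen (ptopo (@Mtopo n)) X (img (act chi) W) /\
        homeo_on (ptopo (@Mtopo n)) tAmb (img (act chi) W) (img R W) R) /\
     (forall chi rho, H chi -> W rho -> W (act chi rho) -> chi = (fun _ => CC1)) /\
     (forall rho, X rho -> (img R W (R rho) <-> exists chi, H chi /\ img (act chi) W rho))).
Proof.
  move=> X H R tX tAmb E Im; have [reps reps_cover] := hfin.
  split; first exact: (HomQS1_finite hG hA reps_cover).
  split; first by move=> chi rho hc hx; split; [exact: HomA_psi_act | exact: (act_eq_id hn hx)].
  split; first exact: (restr_orbit_homeo hG hA reps_cover hn psi).
  by move=> rho0; apply: (restr_covering hG hA reps_cover hn).
Qed.
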